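(* Let $(a,b)\in\mathcal{B}$ with $b$ even, $a\ge 1$, $a+b\ge 1$ and $b\neq 0$. Then $U=\{(a,b)\}$ is unavoidable.
   Context: The bicyclic inverse semigroup is $\mathcal{B}=\{(a,b)\in\mathbb{Z}\times\mathbb{Z}\mid a\ge 0,\ a+b\ge 0\}$ with multiplication $(a,b)(c,d)=(\max\{c+d,a\}-d,\ b+d)$. A subset $U\subseteq\mathcal{B}$ is called avoidable if $\mathcal{B}$ can be partitioned into two subsets $A$ and $B$ such that no element of $U$ can be written as a product $xy$ of two distinct elements $x\neq y$ both in $A$, or both in $B$. A set is unavoidable if it is not avoidable. *)

(* the bicyclic inverse semigroup as a subset of Z x Z. *)
From Stdlib Require Import ZArith.
Open Scope Z_scope.

Definition inB (p : Z * Z) : Prop := 0 <= fst p /\ 0 <= fst p + snd p.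

Definition bmul (p q : Z * Z) : Z * Z :=
  (Z.max (fst q + snd q) (fst p) - snd q, snd p + snd q).

(* U is avoidable: B can be partitioned into two parts A, B (encoded by a
   colouring col : Z*Z -> bool restricted to B, A = col^-1 true,
   B = col^-1 false; either part may be empty) such that no element of U is
   a product xy of distinct x <> y lying in the same part. *)
Definition avoidable (U : Z * Z -> Prop) : Prop :=
  exists col : Z * Z -> bool,
    forall x y : Z * Z, inB x -> inB y -> x <> y -> col x = col y ->
      ~ U (bmul x y).

Definition unavoidable (U : Z * Z -> Prop) : Prop := ~ avoidable U.

(* Write b = 2k and set p = min(a, a + k) - 1.  The three distinct elements
   (a + k, k), (a, k) and (p, k) of B multiply pairwise, in a suitable order,
   to (a, 2k); since two of them receive the same colour in any 2-colouring
   of B, no partition avoids (a, b). *)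
From Stdlib Require Import ZArith Lia.
Open Scope Z_scope.

Lemma bool_pigeonhole (c1 c2 c3 : bool) : c1 = c2 \/ c1 = c3 \/ c3 = c2.
Proof. destruct c1, c2, c3; tauto. Qed.

Lemma unavoidable_of_triangle (U : Z * Z -> Prop) (x y z : Z * Z) :
  inB x -> inB y -> inB z -> x <> y -> x <> z -> z <> y ->
  U (bmul x y) -> U (bmul x z) -> U (bmul z y) -> unavoidable U.
Proof.
  intros Ix Iy Iz Dxy Dxz Dzy Uxy Uxz Uzy [col Hcol].
  destruct (bool_pigeonhole (col x) (col y) (col z)) as [E | [E | E]].
  - exact (Hcol x y Ix Iy Dxy E Uxy).
  - exact (Hcol x z Ix Iz Dxz E Uxz).
  - exact (Hcol z y Iz Iy Dzy E Uzy).
Qed.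

Lemma bmul_same_snd_eq (a c e d : Z) :
  Z.max (e + d) c = a + d -> bmul (c, d) (e, d) = (a, 2 * d).
Proof. intros Hmax. unfold bmul; cbn [fst snd]. rewrite Hmax. f_equal; lia. Qed.

Theorem proposition2p1 (a b : Z) :
  inB (a, b) -> Z.Even b -> 1 <= a -> 1 <= a + b -> b <> 0 ->
  unavoidable (fun p => p = (a, b)).
Proof.
  intros _ [k ->] Ha Hab Hk.
  set (p := Z.min a (a + k) - 1).
  apply (unavoidable_of_triangle _ (a + k, k) (a, k) (p, k));
    unfold inB, p in *; cbn [fst snd];
    try (intros E; injection E; lia);
    try lia;
    apply bmul_same_snd_eq; lia.
Qed.
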